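(* Let $\theta_{\mathcal S}$, $\theta_{\mathcal E}$ be antiunitary involutions on finite-dimensional Hilbert spaces $\mathcal H_{\mathcal S}$, $\mathcal H_{\mathcal E}$ with $\theta_{\mathcal S}H_{\mathcal S}=H_{\mathcal S}\theta_{\mathcal S}$ and $\theta_{\mathcal E}H_{\mathcal E}=H_{\mathcal E}\theta_{\mathcal E}$ for self-adjoint $H_{\mathcal S},H_{\mathcal E}$, and let $V$ be a self-adjoint operator on $\mathcal H_{\mathcal S}\otimes\mathcal H_{\mathcal E}$ with $(\theta_{\mathcal S}\otimes\theta_{\mathcal E})V=V(\theta_{\mathcal S}\otimes\theta_{\mathcal E})$. Let $\tau>0$ and let $\rho_{\mathcal E}$ be a state on $\mathcal H_{\mathcal E}$ with $\theta_{\mathcal E}\rho_{\mathcal E}\theta_{\mathcal E}=\rho_{\mathcal E}$. Let $U=e^{-i\tau H}$ with $H=H_{\mathcal S}\otimes\mathrm{Id}+\mathrm{Id}\otimes H_{\mathcal E}+V$, and $\mathcal L(\rho)=\mathrm{Tr}_{\mathcal H_{\mathcal E}}(U(\rho\otimes\rho_{\mathcal E})U^* )$. If $\mathcal L$ is primitive and its unique invariant state $\rho$ satisfies $U(\rho\otimes\rho_{\mathcal E})U^*=\mathcal L(\rho)\otimes\rho_{\mathcal E}$, then, with $\Theta(X)=\theta_{\mathcal S}X\theta_{\mathcal S}$, one has $\Theta(\rho)=\rho$ and $\Theta\circ\mathcal L^*\circ\Theta=\mathcal L^{*\rho}$, i.e. the pair $(\mathcal L,\rho)$ is time-reversal inv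ariant.
   Context: $\mathcal L^*$ is the dual (Heisenberg) map of $\mathcal L$: $\mathrm{Tr}(\mathcal L(\rho)A)=\mathrm{Tr}(\rho\mathcal L^*(A))$. $\mathcal L^{*\rho}$ is the adjoint of $\mathcal L^*$ with respect to the inner product $\langle A,B\rangle_\rho=\mathrm{Tr}(\rho A^*B)$ on operators on $\mathcal H_{\mathcal S}$. A CP map with Kraus operators $V_i$ is primitive if for some $n$ the products $V_{i_1}\cdots V_{i_n}$ span all operators on $\mathcal H_{\mathcal S}$. *)

From HB Require Import structures.
From mathcomp Require Import all_boot all_order all_algebra.
From mathcomp Require Import all_classical all_reals all_analysis.
From mathcomp Require Import complex mxtens.
Set Implicit Arguments. Unset Strict Implicit. Unset Printing Implicit Defensive.
Import Order.TTheory GRing.Theory Num.Theory.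
Import numFieldNormedType.Exports.
Local Open Scope ring_scope.

Section QDefs.
Variable R : realType.
Local Notation C := (R[i]).

Definition adjmx m n (A : 'M[C]_(m, n)) : 'M[C]_(n, m) := map_mx (@conjc R) A^T.

(* standard inner product <u, v> on C^n (antilinear in the first argument) *)
Definition cdot n (u v : 'cV[C]_n) : C := (adjmx u *m v) 0 0.

Definition selfadj n (A : 'M[C]_n) : Prop := adjmx A = A.

Definition psd n (A : 'M[C]_n) : Prop :=
  selfadj A /\ forall v : 'cV[C]_n, 0 <= cdot v (A *m v).
Definition is_state n (rho : 'M[C]_n) : Prop := psd rho /\ \tr rho = 1.

Definition antiunitary n (th : 'cV[C]_n -> 'cV[C]_n) : Prop :=
  (forall (a : C) u v, th (a *: u + v) = conjc a *: th u + th v) /\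
  (forall u v, cdot (th u) (th v) = conjc (cdot u v)).
Definition antiunitary_involution n (th : 'cV[C]_n -> 'cV[C]_n) : Prop :=
  antiunitary th /\ forall v, th (th v) = v.

Definition mx_of n (f : 'cV[C]_n -> 'cV[C]_n) : 'M[C]_n :=
  \matrix_(i, j) f (delta_mx j 0) i 0.

(* tensor product θ_S ⊗ θ_E of two antilinear maps: the antilinear map
   v ↦ (T_S ⊗ T_E) conj(v), where T = mx_of θ (so θ v = T conj(v)); it is the
   unique antilinear map with (θ_S ⊗ θ_E)(u ⊗ w) = θ_S u ⊗ θ_E w. *)
Definition tens_anti n m (thS : 'cV[C]_n -> 'cV[C]_n) (thE : 'cV[C]_m -> 'cV[C]_m)
  (v : 'cV[C]_(n * m)) : 'cV[C]_(n * m) :=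
  (mx_of thS *t mx_of thE) *m map_mx (@conjc R) v.

Definition conj_anti n (th : 'cV[C]_n -> 'cV[C]_n) (X : 'M[C]_n) : 'M[C]_n :=
  mx_of (fun v => th (X *m th v)).

Definition ptrE n m (X : 'M[C]_(n * m)) : 'M[C]_n :=
  \matrix_(i, k) \sum_(j < m) X (mxtens_index (i, j)) (mxtens_index (k, j)).

Definition expmx n (A : 'M[C]_n) : 'M[C]_n :=
  let S := fun N : nat => \sum_(k < N) (k`!%:R)^-1 *: A ^+ k in
  \matrix_(i, j) Complex (limn (fun N => complex.Re (S N i j))) (limn (fun N => complex.Im (S N i j))).

(* dual (Heisenberg) map: Tr(L(rho) A) = Tr(rho L^*(A)) *)
Definition dualmap n (L : 'M[C]_n -> 'M[C]_n) (A : 'M[C]_n) : 'M[C]_n :=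
  \matrix_(i, j) \tr (L (delta_mx j i) *m A).

Definition ip_rho n (rho A B : 'M[C]_n) : C := \tr (rho *m adjmx A *m B).

Definition primitive n (L : 'M[C]_n -> 'M[C]_n) : Prop :=
  exists (k : nat) (Vs : 'I_k -> 'M[C]_n),
    (forall X, L X = \sum_(i < k) Vs i *m X *m adjmx (Vs i)) /\
    exists N : nat, forall X : 'M[C]_n,
      exists c : N.-tuple 'I_k -> C,
        X = \sum_(s : N.-tuple 'I_k) c s *: \prod_(l < N) Vs (tnth s l).

End QDefs.

(* Write [θ v = T conj(v)], so that [Θ X = θ X θ = T conj(X) conj(T)]; for the composite
   [W = T_S ⊗ T_E] the map [Θ_W] is a multiplicative involution that commutes with the
   partial trace.  The symmetry assumptions give [Θ_W H = H], hence
   [Θ_W U = exp(conj(-iτ) H) = U†] and [Θ_W (U†) = U].  As the unitary [U] commutes with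
   [ρ ⊗ ρ_E], applying [Θ_W] to [U† (ρ ⊗ ρ_E) U = ρ ⊗ ρ_E] shows that the state [Θ ρ] is
   again invariant, so [Θ ρ = ρ] by uniqueness.  Likewise [Θ ∘ L^* ∘ Θ] is the dual of the
   channel built from [U†] instead of [U], and a cyclic-trace computation using that
   [U†] commutes with [ρ ⊗ ρ_E] identifies it with the [ρ]-adjoint of [L^*].  Unitarity of
   [U] comes from [exp(A + B) = exp A exp B] for commuting [A], [B], proved by bounding the
   tail of the Cauchy product of the exponential series. *)

From HB Require Import structures.
From mathcomp Require Import all_boot all_order all_algebra.
From mathcomp Require Import all_classical all_reals all_analysis.
From mathcomp Require Import complex mxtens.
From mathcomp Require Import zify ring.
Import Order.TTheory GRing.Theory Num.Theory.
Import numFieldNormedType.Exports.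
Set Implicit Arguments. Unset Strict Implicit. Unset Printing Implicit Defensive.
Local Open Scope classical_set_scope.
Local Open Scope ring_scope.

Notation conjmx := (map_mx conjc).

Section Adjoint.
Variable R : realType.
Local Notation C := R[i].

Lemma conjmxK m n (X : 'M[C]_(m, n)) : conjmx (conjmx X) = X.
Proof. by apply/matrixP => i j; rewrite !mxE conjcK. Qed.

Lemma adjmxK m n (X : 'M[C]_(m, n)) : adjmx (adjmx X) = X.
Proof. by apply/matrixP => i j; rewrite !mxE conjcK. Qed.

Lemma adjmxM m n p (X : 'M[C]_(m, n)) (Y : 'M[C]_(n, p)) :
  adjmx (X *m Y) = adjmx Y *m adjmx X.
Proof. by rewrite /adjmx trmx_mul map_mxM. Qed.

Lemma adjmxD m n (X Y : 'M[C]_(m, n)) : adjmx (X + Y) = adjmx X + adjmx Y.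
Proof. by rewrite /adjmx linearD /= map_mxD. Qed.

Lemma adjmxZ m n c (X : 'M[C]_(m, n)) : adjmx (c *: X) = conjc c *: adjmx X.
Proof. by rewrite /adjmx linearZ /= map_mxZ. Qed.

Lemma adjmx1 n : adjmx (1%:M : 'M[C]_n) = 1%:M.
Proof. by rewrite /adjmx trmx1 map_mx1. Qed.

Lemma adjmx_tens m n p q (X : 'M[C]_(m, n)) (Y : 'M[C]_(p, q)) :
  adjmx (X *t Y) = adjmx X *t adjmx Y.
Proof. by rewrite /adjmx trmx_tens map_mxT. Qed.

Lemma adjmx_conj m n (X : 'M[C]_(m, n)) : adjmx (conjmx X) = X^T.
Proof. by apply/matrixP => i j; rewrite !mxE conjcK. Qed.

Lemma eq_mx_mulv n (M M' : 'M[C]_n) : (forall v : 'cV_n, M *m v = M' *m v) -> M = M'.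
Proof.
move=> MM'; apply/matrixP => i j.
by have := congr1 (fun v : 'cV_n => v i 0) (MM' (delta_mx j 0)); rewrite -!colE !mxE.
Qed.

End Adjoint.

Lemma big_nat_triangle (V : zmodType) (f : nat -> nat -> V) N :
  \sum_(0 <= k < N) \sum_(0 <= l < N | (k + l < N)%N) f k l =
  \sum_(0 <= m < N) \sum_(0 <= i < m.+1) f (m - i)%N i.
Proof.
elim: N => [|N IH]; first by rewrite !big_geq.
rewrite [RHS]big_nat_recr //= -IH.
have split_row k : (k < N.+1)%N ->
    \sum_(0 <= l < N.+1 | (k + l < N.+1)%N) f k l =
    \sum_(0 <= l < N.+1 | (k + l < N)%N) f k l + f k (N - k)%N.
  move=> kN; rewrite (bigID (fun l => (k + l < N)%N)) /=; congr (_ + _).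
    by apply: eq_bigl => l; apply/andP/idP => [[]|h] //; split => //; lia.
  have hk : (N - k < N.+1)%N by lia.
  rewrite big_mkord (big_pred1 (Ordinal hk)) //= => l /=.
  apply/andP/eqP => [[h1 h2]|->] /=; last by split; lia.
  by apply: val_inj => /=; lia.
rewrite (eq_big_nat _ _ (fun k hk => split_row k (proj2 (andP hk)))) big_split /=.
congr (_ + _).
  rewrite big_nat_recr //= [X in _ + X]big1_seq => [|l /andP[h _]]; last by lia.
  rewrite addr0; apply: eq_big_nat => k /andP[_ kN].
  rewrite big_mkcond big_nat_recr //= ifN; last by apply/negP; lia.
  by rewrite addr0 -big_mkcond.
rewrite big_nat_rev /= add0n; apply: eq_big_nat => i /andP[_ iN].
by rewrite subSS subKn // -ltnS.
Qed.

Lemma big_nat_square_split (V : zmodType) (f : nat -> nat -> V) N :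
  \sum_(0 <= k < N) \sum_(0 <= l < N) f k l =
  \sum_(0 <= m < N) \sum_(0 <= i < m.+1) f (m - i)%N i +
  \sum_(0 <= k < N) \sum_(0 <= l < N | (N <= k + l)%N) f k l.
Proof.
rewrite -big_nat_triangle -big_split /=; apply: eq_bigr => k _.
rewrite (bigID (fun l => (k + l < N)%N)) /=; congr (_ + _).
by apply: eq_bigl => l; rewrite -leqNgt.
Qed.

Lemma invfact_binomial (F : numFieldType) m i : (i <= m)%N ->
  ((m - i)`!%:R^-1 * i`!%:R^-1 : F) = m`!%:R^-1 * 'C(m, i)%:R.
Proof.
move=> im; have fact_neq0 k : (k`!%:R : F) != 0 by rewrite pnatr_eq0 -lt0n fact_gt0.
have bin_neq0 : ('C(m, i)%:R : F) != 0 by rewrite pnatr_eq0 -lt0n bin_gt0.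
have := congr1 (fun k => k%:R : F) (bin_fact im); rewrite !natrM => <-.
by field; rewrite !fact_neq0 bin_neq0.
Qed.

Lemma exp_coeff_binomial (R : realType) (a b : R) m :
  \sum_(0 <= i < m.+1) exp_coeff a (m - i)%N * exp_coeff b i = exp_coeff (a + b) m.
Proof.
rewrite /exp_coeff /= exprDn mulr_suml big_mkord; apply: eq_bigr => i _.
rewrite mulrACA invfact_binomial ?(leq_ord i) // -mulr_natr; ring.
Qed.

Definition exp_coeff_tail (R : realType) (a b : R) N :=
  \sum_(0 <= k < N) \sum_(0 <= l < N | (N <= k + l)%N) exp_coeff a k * exp_coeff b l.

Lemma exp_coeff_tailE (R : realType) (a b : R) N : exp_coeff_tail a b N =
  series (exp_coeff a) N * series (exp_coeff b) N - series (exp_coeff (a + b)) N.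
Proof.
rewrite /exp_coeff_tail /series /= mulr_suml (eq_bigr _ (fun k _ => mulr_sumr _ _ _ _)).
rewrite big_nat_square_split (eq_bigr _ (fun m _ => exp_coeff_binomial a b m)).
by rewrite addrAC subrr add0r.
Qed.

Lemma exp_coeff_tail_cvg0 (R : realType) (a b : R) : exp_coeff_tail a b @ \oo --> 0.
Proof.
have expR_series x : series (exp_coeff x) @ \oo --> expR x.
  exact: is_cvg_series_exp_coeff.
rewrite (funext (@exp_coeff_tailE R a b)).
rewrite -(subrr (expR (a + b))) {1}expRD.
by apply: cvgB; [apply: cvgM |]; apply: expR_series.
Qed.

Section ComplexConvergence.
Variable R : realType.
Local Notation C := R[i].
Local Notation Re := (@complex.Re R).
Local Notation Im := (@complex.Im R).
Implicit Types (u v : nat -> C) (a b : C).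
Local Open Scope complex_scope.

Lemma Re_add a b : Re (a + b) = Re a + Re b. Proof. by case: a; case: b. Qed.
Lemma Im_add a b : Im (a + b) = Im a + Im b. Proof. by case: a; case: b. Qed.
Lemma Re_conj a : Re (conjc a) = Re a. Proof. by case: a. Qed.
Lemma Im_conj a : Im (conjc a) = - Im a. Proof. by case: a. Qed.
Lemma Re_mul a b : Re (a * b) = Re a * Re b - Im a * Im b.
Proof. by case: a; case: b. Qed.
Lemma Im_mul a b : Im (a * b) = Re a * Im b + Im a * Re b.
Proof. by case: a => ? ?; case: b => ? ? /=; rewrite addrC. Qed.

Lemma Re_sum (I : Type) (s : seq I) (P : pred I) (F : I -> C) :
  Re (\sum_(i <- s | P i) F i) = \sum_(i <- s | P i) Re (F i).
Proof. exact: (big_morph _ Re_add). Qed.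

Lemma Im_sum (I : Type) (s : seq I) (P : pred I) (F : I -> C) :
  Im (\sum_(i <- s | P i) F i) = \sum_(i <- s | P i) Im (F i).
Proof. exact: (big_morph _ Im_add). Qed.

Lemma normc_ReIm_le a (e : R) : `|a| <= e%:C -> `|Re a| <= e /\ `|Im a| <= e.
Proof.
rewrite normc_def lecR => h; split; apply: le_trans h.
  by rewrite -sqrtr_sqr ler_wsqrtr // lerDl sqr_ge0.
by rewrite -sqrtr_sqr ler_wsqrtr // lerDr sqr_ge0.
Qed.

Definition ccvg u a :=
  (fun N => Re (u N)) @ \oo --> Re a /\ (fun N => Im (u N)) @ \oo --> Im a.

Lemma ccvg_cst a : ccvg (fun=> a) a.
Proof. by split; apply: cvg_cst. Qed.

Lemma ccvgD u v a b : ccvg u a -> ccvg v b -> ccvg (fun N => u N + v N) (a + b).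
Proof.
move=> [ua1 ua2] [vb1 vb2]; split.
  by rewrite Re_add; under eq_fun do rewrite Re_add; apply: cvgD.
by rewrite Im_add; under eq_fun do rewrite Im_add; apply: cvgD.
Qed.

Lemma ccvgM u v a b : ccvg u a -> ccvg v b -> ccvg (fun N => u N * v N) (a * b).
Proof.
move=> [ua1 ua2] [vb1 vb2]; split.
  by rewrite Re_mul; under eq_fun do rewrite Re_mul; apply: cvgB; apply: cvgM.
by rewrite Im_mul; under eq_fun do rewrite Im_mul; apply: cvgD; apply: cvgM.
Qed.

Lemma ccvgJ u a : ccvg u a -> ccvg (fun N => conjc (u N)) (conjc a).
Proof.
move=> [ua1 ua2]; split; first by rewrite Re_conj; under eq_fun do rewrite Re_conj.
by rewrite Im_conj; under eq_fun do rewrite Im_conj; apply: cvgN.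
Qed.

Lemma ccvg_sum (I : Type) (s : seq I) (P : pred I) (F : I -> nat -> C) (L : I -> C) :
  (forall i, P i -> ccvg (F i) (L i)) ->
  ccvg (fun N => \sum_(i <- s | P i) F i N) (\sum_(i <- s | P i) L i).
Proof.
move=> FL; elim: s => [|x s IH].
  by under eq_fun do rewrite big_nil; rewrite big_nil; apply: ccvg_cst.
under eq_fun do rewrite big_cons; rewrite big_cons.
by case: ifP => Px //; apply: ccvgD => //; apply: FL.
Qed.

Lemma ccvg_unique u a b : ccvg u a -> ccvg u b -> a = b.
Proof.
move=> [ua1 ua2] [ub1 ub2].
have eRe : Re a = Re b by rewrite -(cvg_lim _ ua1) // (cvg_lim _ ub1).
have eIm : Im a = Im b by rewrite -(cvg_lim _ ua2) // (cvg_lim _ ub2).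
by move: eRe eIm {ua1 ua2 ub1 ub2}; case: a => ? ?; case: b => ? ? /= -> ->.
Qed.

Lemma cvg_dist_le0 (x e : nat -> R) :
  (\forall N \near \oo, `|x N| <= e N) -> e @ \oo --> 0 -> x @ \oo --> 0.
Proof.
move=> xe e0; apply: (@squeeze_cvgr _ _ _ _ (fun N => - e N) e).
- by near=> N; rewrite -ler_norml; near: N.
- by rewrite -oppr0; apply: cvgN.
- exact: e0.
Unshelve. all: by end_near. Qed.

Lemma ccvg_near u v a (e : nat -> R) : ccvg u a ->
  (\forall N \near \oo, `|v N - u N| <= (e N)%:C) -> e @ \oo --> 0 -> ccvg v a.
Proof.
move=> [ua1 ua2] vu e0.
have vE N : v N = u N + (v N - u N) by rewrite addrC subrK.
have [d1 d2] : (fun N => Re (v N - u N)) @ \oo --> 0 /\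
               (fun N => Im (v N - u N)) @ \oo --> 0.
  by split; apply: (cvg_dist_le0 _ e0); apply: filterS vu => N /normc_ReIm_le [].
split.
  by rewrite -[Re a]addr0; under eq_fun do rewrite vE Re_add; apply: cvgD.
by rewrite -[Im a]addr0; under eq_fun do rewrite vE Im_add; apply: cvgD.
Qed.

End ComplexConvergence.

Section MatrixConvergence.
Variable R : realType.
Local Notation C := R[i].
Local Open Scope complex_scope.

Definition mxcvg m n (M : nat -> 'M[C]_(m, n)) (L : 'M[C]_(m, n)) :=
  forall i j, ccvg (fun N => M N i j) (L i j).

Lemma mxcvg_cst m n (X : 'M[C]_(m, n)) : mxcvg (fun=> X) X.
Proof. by move=> i j; apply: ccvg_cst. Qed.

Lemma mxcvg_mul m n p (M : nat -> 'M[C]_(m, n)) (P : nat -> 'M[C]_(n, p)) X Y :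
  mxcvg M X -> mxcvg P Y -> mxcvg (fun N => M N *m P N) (X *m Y).
Proof.
move=> MX PY i j; under eq_fun do rewrite mxE; rewrite mxE.
by apply: ccvg_sum => k _; apply: ccvgM.
Qed.

Lemma mxcvg_conj m n (M : nat -> 'M[C]_(m, n)) X :
  mxcvg M X -> mxcvg (fun N => conjmx (M N)) (conjmx X).
Proof.
by move=> MX i j; under eq_fun do rewrite mxE; rewrite mxE; apply: ccvgJ.
Qed.

Lemma mxcvg_tr m n (M : nat -> 'M[C]_(m, n)) X :
  mxcvg M X -> mxcvg (fun N => (M N)^T) X^T.
Proof. by move=> MX i j; under eq_fun do rewrite mxE; rewrite mxE. Qed.

Lemma mxcvg_unique m n (M : nat -> 'M[C]_(m, n)) X Y :
  mxcvg M X -> mxcvg M Y -> X = Y.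
Proof. by move=> MX MY; apply/matrixP => i j; apply: ccvg_unique (MX i j) (MY i j). Qed.

Lemma mxcvg_near m n (M P : nat -> 'M[C]_(m, n)) L (e : nat -> R) : mxcvg M L ->
  (\forall N \near \oo, forall i j, `|P N i j - M N i j| <= (e N)%:C) ->
  e @ \oo --> 0 -> mxcvg P L.
Proof.
by move=> ML PM e0 i j; apply: ccvg_near (ML i j) _ e0; apply: filterS PM.
Qed.

Lemma mulmx_entry_le m n p (X : 'M[C]_(m, n)) (Y : 'M[C]_(n, p)) (x y : R) :
  (forall i j, `|X i j| <= x%:C) -> (forall i j, `|Y i j| <= y%:C) ->
  forall i j, `|(X *m Y) i j| <= (n%:R * (x * y))%:C.
Proof.
move=> Xx Yy i j; rewrite mxE; apply: le_trans (ler_norm_sum _ _ _) _.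
apply: le_trans (_ : \sum_(l < n) x%:C * y%:C <= _).
  by apply: ler_sum => l _; rewrite normrM ler_pM.
by rewrite sumr_const card_ord !rmorphM /= rmorph_nat mulr_natl.
Qed.

End MatrixConvergence.

Lemma map_mxX (R S : pzRingType) (f : {rmorphism R -> S}) n (A : 'M[R]_n) k :
  map_mx f (A ^+ k) = map_mx f A ^+ k.
Proof.
by elim: k => [|k IH]; rewrite ?map_mx1 // !exprS -!mulmxE map_mxM IH.
Qed.

Lemma trmxX (R : comPzRingType) n (A : 'M[R]_n) k : (A ^+ k)^T = A^T ^+ k.
Proof.
by elim: k => [|k IH]; rewrite ?trmx1 // exprS exprSr -!mulmxE trmx_mul IH.
Qed.

Section MatrixExponential.
Variables (R : realType) (n : nat).
Local Notation C := R[i].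
Local Notation normc := (@ComplexField.Normc.normc R).
Local Notation Re := (@complex.Re R).
Local Notation Im := (@complex.Im R).
Local Open Scope complex_scope.
Implicit Types A B : 'M[C]_n.

Definition expmx_term A k := k`!%:R^-1 *: A ^+ k.
Definition expmx_sum A N := \sum_(k < N) expmx_term A k.

(* The factor [n] pays for the [n] terms of an entry of a matrix product. *)
Definition mxbound A : R := n%:R * \sum_i \sum_j normc (A i j).

Lemma normc_ge0 (z : C) : 0 <= normc z.
Proof. by case: z => * /=; apply: sqrtr_ge0. Qed.

Lemma mxbound_ge0 A : 0 <= mxbound A.
Proof.
by apply: mulr_ge0 => //; do 2!apply: sumr_ge0 => ? _; apply: normc_ge0.
Qed.

Lemma expmx_pow_le A k i j : `|(A ^+ k) i j| <= (mxbound A ^+ k)%:C.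
Proof.
elim: k i j => [|k IH] i j.
  by rewrite !expr0 mxE; case: (i == j); rewrite ?normr1 ?normr0 //= lecR.
have entry_le i' j' : `|A i' j'| <= (\sum_i \sum_j normc (A i j))%:C.
  rewrite [`|_|]/(_%:C) lecR (bigD1 i') //= (bigD1 j') //= -addrA lerDl.
  rewrite addr_ge0 //; do ?apply: sumr_ge0 => ? _; apply: normc_ge0.
rewrite exprSr -mulmxE; apply: le_trans (mulmx_entry_le IH entry_le i j) _.
by rewrite exprSr /mxbound mulrCA mulrA.
Qed.

Lemma expmx_term_le A k i j : `|expmx_term A k i j| <= (exp_coeff (mxbound A) k)%:C.
Proof.
rewrite mxE normrM normfV normr_nat /exp_coeff /= mulrC rmorphM /= fmorphV /= rmorph_nat.
by rewrite ler_pM // expmx_pow_le.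
Qed.

Lemma expmx_sum_cvg A : mxcvg (expmx_sum A) (expmx A).
Proof.
have series_normed_cvg (u : nat -> R) :
    (forall k, `|u k| <= exp_coeff (mxbound A) k) -> cvgn (series u).
  move=> ub; apply: (@normed_cvg _ R^o).
  apply: (series_le_cvg _ _ ub (is_cvg_series_exp_coeff _)) => // k.
  exact: exp_coeff_ge0 (mxbound_ge0 A).
move=> i j; rewrite mxE /ccvg /=.
have [ReE ImE] : (fun N => Re (expmx_sum A N i j)) =
      series (fun k => Re (expmx_term A k i j)) /\
    (fun N => Im (expmx_sum A N i j)) = series (fun k => Im (expmx_term A k i j)).
  split; apply: funext => N;
  by rewrite /series /expmx_sum /= summxE (Re_sum, Im_sum) big_mkord.
by rewrite ReE ImE; split; apply: series_normed_cvg => k;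
  have [] := normc_ReIm_le (expmx_term_le A k i j).
Qed.

Lemma expmx_conj A : conjmx (expmx A) = expmx (conjmx A).
Proof.
apply: mxcvg_unique (mxcvg_conj (expmx_sum_cvg A)) _.
suff -> : (fun N => conjmx (expmx_sum A N)) = expmx_sum (conjmx A).
  exact: expmx_sum_cvg.
apply: funext => N; rewrite /expmx_sum map_mx_sum; apply: eq_bigr => k _.
by rewrite map_mxZ map_mxX fmorphV /= conjc_nat.
Qed.

Lemma expmx_tr A : (expmx A)^T = expmx A^T.
Proof.
apply: mxcvg_unique (mxcvg_tr (expmx_sum_cvg A)) _.
suff -> : (fun N => (expmx_sum A N)^T) = expmx_sum A^T by apply: expmx_sum_cvg.
apply: funext => N; rewrite /expmx_sum raddf_sum; apply: eq_bigr => k _.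
by rewrite /expmx_term -trmxX; apply/matrixP => a b; rewrite !mxE.
Qed.

Lemma expmx_adj A : adjmx (expmx A) = expmx (adjmx A).
Proof. by rewrite /adjmx expmx_tr expmx_conj. Qed.

Lemma expmx_sum_mul A B N : A *m B = B *m A ->
  expmx_sum A N *m expmx_sum B N = expmx_sum (A + B) N +
    \sum_(0 <= k < N) \sum_(0 <= l < N | (N <= k + l)%N) expmx_term A k *m expmx_term B l.
Proof.
move=> AB; rewrite /expmx_sum mulmx_suml.
under eq_bigr => k _ do
  rewrite mulmx_sumr -(big_mkord xpredT (fun l => expmx_term A k *m expmx_term B l)).
rewrite -(big_mkord xpredT (fun k => \sum_(0 <= l < N) expmx_term A k *m expmx_term B l)).
rewrite big_nat_square_split -(big_mkord xpredT (expmx_term (A + B))).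
congr (_ + _); apply: eq_bigr => m _.
rewrite /expmx_term exprDn_comm // scaler_sumr big_mkord; apply: eq_bigr => i _.
rewrite -scalemxAl -scalemxAr scalerA mulmxE.
by rewrite invfact_binomial ?(leq_ord i) // -scalerA scaler_nat.
Qed.

Lemma expmx_tail_le A B N i j :
  `|(\sum_(0 <= k < N) \sum_(0 <= l < N | (N <= k + l)%N)
        expmx_term A k *m expmx_term B l) i j|
  <= (n%:R * exp_coeff_tail (mxbound A) (mxbound B) N)%:C.
Proof.
rewrite /exp_coeff_tail summxE; apply: le_trans (ler_norm_sum _ _ _) _.
rewrite mulr_sumr rmorph_sum; apply: ler_sum => k _.
rewrite summxE; apply: le_trans (ler_norm_sum _ _ _) _.
rewrite mulr_sumr rmorph_sum; apply: ler_sum => l _.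
by apply: mulmx_entry_le; apply: expmx_term_le.
Qed.

Lemma expmxD A B : A *m B = B *m A -> expmx (A + B) = expmx A *m expmx B.
Proof.
move=> AB; apply: mxcvg_unique (expmx_sum_cvg (A + B)) _.
have tail0 : (fun N => n%:R * exp_coeff_tail (mxbound A) (mxbound B) N) @ \oo
               --> (n%:R * 0 : R).
  exact: cvgM (cvg_cst _) (exp_coeff_tail_cvg0 _ _).
rewrite mulr0 in tail0.
apply: (mxcvg_near (mxcvg_mul (expmx_sum_cvg A) (expmx_sum_cvg B)) _ tail0).
apply: nearW => N i j; rewrite (expmx_sum_mul N AB) mxE opprD addrA subrr add0r normrN.
exact: expmx_tail_le.
Qed.

Lemma expmx0 : expmx (0 : 'M[C]_n) = 1%:M.
Proof.
apply: mxcvg_unique (expmx_sum_cvg 0) _.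
apply: (mxcvg_near (mxcvg_cst 1%:M) _ (cvg_cst (0 : R))).
near=> N => i j.
have N0 : (0 < N)%N by near: N; exists 1%N.
rewrite /expmx_sum -(prednK N0) big_ord_recl big1 => [|k _]; last first.
  by rewrite /expmx_term expr0n /= scaler0.
by rewrite addr0 /expmx_term expr0 fact0 invr1 scale1r subrr normr0.
Unshelve. all: by end_near. Qed.

Lemma expmx_mulN A : expmx A *m expmx (- A) = 1%:M.
Proof. by rewrite -expmxD ?subrr ?expmx0 // mulmxN mulNmx. Qed.

End MatrixExponential.

Lemma expmx_intertwine (R : realType) m n (W : 'M[R[i]]_(m, n)) X Y :
  W *m X = Y *m W -> W *m expmx X = expmx Y *m W.
Proof.
move=> WXY; apply: mxcvg_unique (mxcvg_mul (mxcvg_cst W) (expmx_sum_cvg X)) _.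
suff -> : (fun N => W *m expmx_sum X N) = (fun N => expmx_sum Y N *m W).
  exact: mxcvg_mul (expmx_sum_cvg Y) (mxcvg_cst W).
apply: funext => N; rewrite /expmx_sum mulmx_sumr mulmx_suml; apply: eq_bigr => k _.
rewrite /expmx_term -scalemxAl -scalemxAr; congr (_ *: _).
elim: (nat_of_ord k) => [|l IH]; first by rewrite !expr0 mulmx1 mul1mx.
by rewrite !exprSr -!mulmxE mulmxA IH -mulmxA WXY mulmxA.
Qed.

Lemma expmx_skew_unitary (R : realType) n (A : 'M[R[i]]_n) :
  adjmx A = - A -> expmx A *m adjmx (expmx A) = 1%:M.
Proof. by move=> AN; rewrite expmx_adj AN expmx_mulN. Qed.

Section PartialTrace.
Variable R : realType.
Local Notation C := R[i].

Lemma sum_mxtens_index m n (F : 'I_(m * n) -> C) :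
  \sum_k F k = \sum_(i < m) \sum_(j < n) F (mxtens_index (i, j)).
Proof.
rewrite pair_big /= (reindex (@mxtens_index m n)) /=; last first.
  by exists (@mxtens_unindex m n) => k _; rewrite (mxtens_indexK, mxtens_unindexK).
by apply: eq_bigr => -[i j] _.
Qed.

Lemma mxtrace_mul_delta n (X : 'M[C]_n) i j : \tr (X *m delta_mx j i) = X i j.
Proof.
rewrite /mxtrace (bigD1 i) //= big1 ?addr0 => [|k /negPf ki].
  rewrite mxE (bigD1 j) //= big1 ?addr0; first by rewrite mxE !eqxx mulr1.
  by move=> k /negPf kj; rewrite mxE kj mulr0.
by rewrite mxE big1 // => l _; rewrite mxE ki andbF mulr0.
Qed.

Lemma eq_mx_mxtrace n (M M' : 'M[C]_n) :
  (forall A, \tr (M *m A) = \tr (M' *m A)) -> M = M'.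
Proof. by move=> MM'; apply/matrixP => i j; rewrite -mxtrace_mul_delta MM' mxtrace_mul_delta. Qed.

Lemma tensmx11 m n : (1%:M : 'M[C]_m) *t (1%:M : 'M[C]_n) = 1%:M.
Proof.
apply/matrixP => p q.
case: (mxtens_indexP p) => i j; case: (mxtens_indexP q) => k l.
rewrite tensmxE !mxE (inj_eq (can_inj (@mxtens_indexK m n))) xpair_eqE.
by case: (i == k); case: (j == l); rewrite /= ?mulr1 ?mulr0.
Qed.

Lemma ptrE_tens m n (X : 'M[C]_m) (Y : 'M[C]_n) : ptrE (X *t Y) = \tr Y *: X.
Proof.
apply/matrixP => i k; rewrite !mxE /mxtrace mulr_suml; apply: eq_bigr => j _.
by rewrite tensmxE mulrC.
Qed.

Lemma mxtrace_ptrE m n (Z : 'M[C]_(m * n)) A :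
  \tr (ptrE Z *m A) = \tr (Z *m (A *t 1%:M)).
Proof.
rewrite /mxtrace sum_mxtens_index; apply: eq_bigr => i _.
rewrite mxE; under eq_bigr do rewrite mxE mulr_suml.
rewrite exchange_big /=; apply: eq_bigr => j _.
rewrite mxE sum_mxtens_index; apply: eq_bigr => k _.
rewrite (bigD1 j) //= big1 ?addr0 => [|l /negPf lj]; first by rewrite tensmxE mxE eqxx mulr1.
by rewrite tensmxE mxE lj /= !mulr0.
Qed.

Lemma ptrE_conj m n (Z : 'M[C]_(m * n)) : ptrE (conjmx Z) = conjmx (ptrE Z).
Proof.
by apply/matrixP => i k; rewrite !mxE rmorph_sum; apply: eq_bigr => j _; rewrite mxE.
Qed.

Lemma ptrE_adj m n (Z : 'M[C]_(m * n)) : adjmx (ptrE Z) = ptrE (adjmx Z).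
Proof.
by apply/matrixP => i k; rewrite !mxE rmorph_sum; apply: eq_bigr => j _; rewrite !mxE.
Qed.

Lemma ptrE_mul_tens1 m n (Z : 'M[C]_(m * n)) (X Y : 'M[C]_m) :
  ptrE ((X *t 1%:M) *m Z *m (Y *t 1%:M)) = X *m ptrE Z *m Y.
Proof.
apply: eq_mx_mxtrace => A.
rewrite mxtrace_ptrE -!mulmxA mxtrace_mulC -!mulmxA !tensmx_mul !mulmx1.
by rewrite [RHS]mxtrace_mulC -!mulmxA mxtrace_ptrE.
Qed.

Lemma ptrE_mul_1tens m n (Z : 'M[C]_(m * n)) (Y Y' : 'M[C]_n) : Y' *m Y = 1%:M ->
  ptrE ((1%:M *t Y) *m Z *m (1%:M *t Y')) = ptrE Z.
Proof.
move=> Y'Y; apply: eq_mx_mxtrace => A.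
by rewrite !mxtrace_ptrE -!mulmxA mxtrace_mulC -!mulmxA !tensmx_mul !mulmx1 !mul1mx Y'Y.
Qed.

End PartialTrace.

Section AntiunitaryConjugation.
Variable R : realType.
Local Notation C := R[i].

(* If [θ v = T conj(v)], then [θ X θ] is the matrix [conj_antimx T X]. *)
Definition conj_antimx n (T X : 'M[C]_n) := T *m conjmx X *m conjmx T.

Lemma conj_antimxD n (T X Y : 'M[C]_n) :
  conj_antimx T (X + Y) = conj_antimx T X + conj_antimx T Y.
Proof. by rewrite /conj_antimx map_mxD mulmxDr mulmxDl. Qed.

Lemma conj_antimxZ n (T X : 'M[C]_n) c :
  conj_antimx T (c *: X) = conjc c *: conj_antimx T X.
Proof. by rewrite /conj_antimx map_mxZ -scalemxAr -scalemxAl. Qed.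

Lemma conj_antimx_tens m n (T X : 'M[C]_m) (T' Y : 'M[C]_n) :
  conj_antimx (T *t T') (X *t Y) = conj_antimx T X *t conj_antimx T' Y.
Proof. by rewrite /conj_antimx !map_mxT !tensmx_mul. Qed.

Lemma conj_antimx_adj n (T X : 'M[C]_n) :
  T^T = T -> adjmx (conj_antimx T X) = conj_antimx T (adjmx X).
Proof.
move=> TT; rewrite /conj_antimx !adjmxM !adjmx_conj mulmxA {1}TT /adjmx TT.
by congr (_ *m _ *m _); apply/matrixP => i j; rewrite !mxE conjcK.
Qed.

Variables (n : nat) (T : 'M[C]_n).
Hypothesis T_invol : T *m conjmx T = 1%:M.

Lemma conjmx_invol : conjmx T *m T = 1%:M.
Proof. by have := congr1 conjmx T_invol; rewrite map_mxM conjmxK map_mx1. Qed.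

Lemma conj_antimx1 : conj_antimx T 1%:M = 1%:M.
Proof. by rewrite /conj_antimx map_mx1 mulmx1. Qed.

Lemma conj_antimxM X Y : conj_antimx T (X *m Y) = conj_antimx T X *m conj_antimx T Y.
Proof.
rewrite /conj_antimx map_mxM !mulmxA -[_ *m conjmx T *m T]mulmxA conjmx_invol.
by rewrite mulmx1.
Qed.

Lemma conj_antimxK X : conj_antimx T (conj_antimx T X) = X.
Proof.
rewrite /conj_antimx !map_mxM !conjmxK !mulmxA T_invol mul1mx.
by rewrite -mulmxA T_invol mulmx1.
Qed.

Lemma conj_antimx_expmx A : conj_antimx T (expmx A) = expmx (conj_antimx T A).
Proof.
rewrite /conj_antimx expmx_conj (expmx_intertwine (Y := conj_antimx T A)).
  by rewrite -mulmxA T_invol mulmx1.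
by rewrite /conj_antimx -!mulmxA conjmx_invol mulmx1.
Qed.

Lemma conj_antimx_fixed X :
  (forall v : 'cV_n, T *m conjmx (X *m v) = X *m (T *m conjmx v)) ->
  conj_antimx T X = X.
Proof.
move=> TX; apply: eq_mx_mulv => v; have := TX (T *m conjmx v).
by rewrite !map_mxM conjmxK !mulmxA -[X *m T *m _]mulmxA T_invol mulmx1.
Qed.

End AntiunitaryConjugation.

Section Antiunitary.
Variables (R : realType) (n : nat) (th : 'cV[R[i]]_n -> 'cV[R[i]]_n).
Local Notation C := R[i].
Local Notation T := (mx_of th).
Hypothesis th_anti : antiunitary th.

Lemma antiunitaryD u v : th (u + v) = th u + th v.
Proof. by have := th_anti.1 1 u v; rewrite scale1r conjc1 scale1r. Qed.

Lemma antiunitary0 : th 0 = 0.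
Proof. by apply: (addrI (th 0)); rewrite -antiunitaryD !addr0. Qed.

Lemma antiunitaryZ a u : th (a *: u) = conjc a *: th u.
Proof. by have := th_anti.1 a u 0; rewrite !addr0 antiunitary0 addr0. Qed.

Lemma antiunitaryE v : th v = T *m conjmx v.
Proof.
rewrite {1}(matrix_sum_delta v) (big_morph _ antiunitaryD antiunitary0).
under eq_bigr do rewrite big_ord1 antiunitaryZ.
apply/matrixP => i k; rewrite [k]ord1 summxE !mxE; apply: eq_bigr => j _.
by rewrite !mxE mulrC.
Qed.

Lemma conjmx_delta i : conjmx (delta_mx i 0 : 'cV[C]_n) = delta_mx i 0.
Proof. by apply/matrixP => a b; rewrite !mxE conjc_nat. Qed.

Lemma antiunitary_unitary : adjmx T *m T = 1%:M.
Proof.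
have entry (M : 'M[C]_n) i j :
    ((delta_mx i 0 : 'cV_n)^T *m M *m (delta_mx j 0 : 'cV_n)) 0 0 = M i j.
  by rewrite trmx_delta -rowE -colE !mxE.
have adj_delta i : adjmx (delta_mx i 0 : 'cV[C]_n) = (delta_mx i 0)^T.
  by rewrite /adjmx -map_trmx conjmx_delta.
apply/matrixP => i j; rewrite -entry -[RHS]entry mulmx1.
have := th_anti.2 (delta_mx i 0) (delta_mx j 0).
rewrite /cdot !antiunitaryE !conjmx_delta adjmxM adj_delta !mulmxA => ->.
by have := entry 1%:M i j; rewrite mulmx1 => ->; rewrite mxE conjc_nat.
Qed.

Lemma conj_antiE X : conj_anti th X = conj_antimx T X.
Proof.
apply/matrixP => i j; rewrite mxE !antiunitaryE !map_mxM conjmxK.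
by rewrite !mulmxA -colE mxE.
Qed.

End Antiunitary.

Section AntiunitaryInvolution.
Variables (R : realType) (n : nat) (th : 'cV[R[i]]_n -> 'cV[R[i]]_n).
Local Notation T := (mx_of th).
Hypothesis th_invol : antiunitary_involution th.
Let th_anti := th_invol.1.

Lemma antiunitary_involution_mx : T *m conjmx T = 1%:M.
Proof.
apply: eq_mx_mulv => v; rewrite mul1mx -[RHS](th_invol.2 v).
by rewrite !(antiunitaryE th_anti) map_mxM conjmxK mulmxA.
Qed.

Lemma antiunitary_involution_tr : T^T = T.
Proof.
have : adjmx T = conjmx T.
  rewrite -[adjmx T]mulmx1 -antiunitary_involution_mx mulmxA.
  by rewrite antiunitary_unitary // mul1mx.
by move/(congr1 conjmx); rewrite /adjmx !conjmxK.
Qed.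

Lemma conj_antimx_commute X :
  (forall v, th (X *m v) = X *m th v) -> conj_antimx T X = X.
Proof.
move=> thX; apply: (conj_antimx_fixed antiunitary_involution_mx) => v.
by rewrite -!(antiunitaryE th_anti).
Qed.

Lemma conj_anti_state rho : is_state rho -> is_state (conj_anti th rho).
Proof.
move=> [[rho_sa rho_pos] rho_tr]; rewrite conj_antiE //; split; first split.
- by rewrite /selfadj conj_antimx_adj ?antiunitary_involution_tr // rho_sa.
- move=> v; have -> : conj_antimx T rho *m v = th (rho *m th v).
    by rewrite !(antiunitaryE th_anti) !map_mxM conjmxK !mulmxA.
  by rewrite -{1}(th_invol.2 v) th_anti.2 conj_ge0.
- rewrite /conj_antimx mxtrace_mulC mulmxA conjmx_invol ?antiunitary_involution_mx //.
  by rewrite mul1mx trace_map_mx rho_tr rmorph1.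
Qed.

End AntiunitaryInvolution.

Section RepeatedInteraction.
Variable R : realType.
Local Notation C := R[i].

Definition channel nS nE (U : 'M[C]_(nS * nE)) (rhoE : 'M[C]_nE) (X : 'M[C]_nS) :=
  ptrE (U *m (X *t rhoE) *m adjmx U).

Variables (nS nE : nat) (rhoE : 'M[C]_nE).
Implicit Types (U : 'M[C]_(nS * nE)) (rho A B X : 'M[C]_nS).

Lemma dualmap_channel U X :
  dualmap (channel U rhoE) X = ptrE ((1%:M *t rhoE) *m adjmx U *m (X *t 1%:M) *m U).
Proof.
apply/matrixP => i j; rewrite mxE -mxtrace_mul_delta /channel !mxtrace_ptrE.
transitivity (\tr ((delta_mx j i *t rhoE) *m adjmx U *m (X *t 1%:M) *m U)).
  by rewrite -!mulmxA mxtrace_mulC !mulmxA.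
by rewrite [RHS]mxtrace_mulC !mulmxA tensmx_mul mulmx1 mul1mx.
Qed.

Lemma channel_dual_adjoint U rho A B : selfadj rhoE ->
  adjmx U *m (rho *t rhoE) = (rho *t rhoE) *m adjmx U ->
  ip_rho rho (dualmap (channel U rhoE) A) B =
  ip_rho rho A (dualmap (channel (adjmx U) rhoE) B).
Proof.
move=> rhoE_sa UP; rewrite !dualmap_channel adjmxK /ip_rho ptrE_adj.
rewrite !adjmxM !adjmx_tens !adjmx1 adjmxK rhoE_sa.
have BP : (1%:M *t rhoE) *m ((B *m rho) *t 1%:M) = (B *t 1%:M) *m (rho *t rhoE).
  by rewrite !tensmx_mul !mul1mx !mulmx1.
have PA : ((rho *m adjmx A) *t 1%:M) *m (1%:M *t rhoE) = (rho *t rhoE) *m (adjmx A *t 1%:M).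
  by rewrite !tensmx_mul !mul1mx !mulmx1.
transitivity (\tr ((rho *t rhoE) *m (adjmx A *t 1%:M) *m U *m (B *t 1%:M) *m adjmx U)).
  rewrite -mulmxA mxtrace_mulC -[ptrE _ *m B *m rho]mulmxA mxtrace_ptrE -!mulmxA BP.
  by rewrite mxtrace_mulC -!mulmxA -UP !mulmxA mxtrace_mulC !mulmxA.
by rewrite [RHS]mxtrace_mulC mxtrace_ptrE [RHS]mxtrace_mulC !mulmxA PA.
Qed.

End RepeatedInteraction.

Section TimeReversal.
Variables (R : realType) (nS nE : nat).
Local Notation C := R[i].
Variables (TS : 'M[C]_nS) (TE : 'M[C]_nE) (U : 'M[C]_(nS * nE)) (rhoE : 'M[C]_nE).
Hypotheses (TS_invol : TS *m conjmx TS = 1%:M) (TE_invol : TE *m conjmx TE = 1%:M).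
Hypotheses (rhoE_rev : conj_antimx TE rhoE = rhoE) (U_rev : conj_antimx (TS *t TE) U = adjmx U).

Lemma tensmx_invol : (TS *t TE) *m conjmx (TS *t TE) = 1%:M.
Proof. by rewrite map_mxT tensmx_mul TS_invol TE_invol tensmx11. Qed.

Lemma conj_antimx_adjU : conj_antimx (TS *t TE) (adjmx U) = U.
Proof. by rewrite -U_rev conj_antimxK // tensmx_invol. Qed.

Lemma ptrE_conj_antimx Z : ptrE (conj_antimx (TS *t TE) Z) = conj_antimx TS (ptrE Z).
Proof.
rewrite /conj_antimx map_mxT -ptrE_conj.
rewrite -(ptrE_mul_1tens (conjmx Z) (conjmx_invol TE_invol)) -ptrE_mul_tens1.
rewrite !mulmxA !tensmx_mul !mulmx1 !mul1mx -[_ *m (1%:M *t _) *m _]mulmxA.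
by rewrite tensmx_mul mulmx1 mul1mx.
Qed.

Lemma conj_antimx_dualmap_channel B :
  conj_antimx TS (dualmap (channel U rhoE) (conj_antimx TS B)) =
  dualmap (channel (adjmx U) rhoE) B.
Proof.
rewrite !dualmap_channel adjmxK -ptrE_conj_antimx !(conj_antimxM tensmx_invol).
by rewrite !conj_antimx_tens !conj_antimx1 // rhoE_rev conj_antimxK // U_rev conj_antimx_adjU.
Qed.

Lemma channel_conj_antimx rho :
  adjmx U *m U = 1%:M -> U *m (rho *t rhoE) = (rho *t rhoE) *m U -> \tr rhoE = 1 ->
  channel U rhoE (conj_antimx TS rho) = conj_antimx TS rho.
Proof.
move=> UU UP rhoE_tr; rewrite /channel.
have -> : U *m (conj_antimx TS rho *t rhoE) *m adjmx U =
          conj_antimx (TS *t TE) (adjmx U *m (rho *t rhoE) *m U).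
  by rewrite !(conj_antimxM tensmx_invol) conj_antimx_tens rhoE_rev U_rev conj_antimx_adjU.
by rewrite -mulmxA -UP mulmxA UU mul1mx ptrE_conj_antimx ptrE_tens rhoE_tr scale1r.
Qed.

End TimeReversal.

Lemma conjc_imaginary (R : realType) (t : R) :
  conjc (- ('i * (t%:C)%C)) = 'i * (t%:C)%C :> R[i].
Proof. by apply/eqP; rewrite eq_complex /=; apply/andP; split; apply/eqP; ring. Qed.

Theorem mainTheorem11 (R : realType) (nS nE : nat)
  (thS : 'cV[R[i]]_nS -> 'cV[R[i]]_nS) (thE : 'cV[R[i]]_nE -> 'cV[R[i]]_nE)
  (HS : 'M[R[i]]_nS) (HE : 'M[R[i]]_nE) (V : 'M[R[i]]_(nS * nE))
  (tau : R) (rhoE : 'M[R[i]]_nE) (rho : 'M[R[i]]_nS) :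
  antiunitary_involution thS -> antiunitary_involution thE ->
  selfadj HS -> selfadj HE ->
  (forall v, thS (HS *m v) = HS *m thS v) ->
  (forall v, thE (HE *m v) = HE *m thE v) ->
  selfadj V ->
  (forall v, tens_anti thS thE (V *m v) = V *m tens_anti thS thE v) ->
  0 < tau ->
  is_state rhoE -> conj_anti thE rhoE = rhoE ->
  let H := HS *t (1%:M : 'M[R[i]]_nE) + (1%:M : 'M[R[i]]_nS) *t HE + V in
  let U := expmx ((- ('i * (tau%:C)%C)) *: H) in
  let L := fun X : 'M[R[i]]_nS => ptrE (U *m (X *t rhoE) *m adjmx U) in
  primitive L ->
  is_state rho -> L rho = rho ->
  (forall sigma, is_state sigma -> L sigma = sigma -> sigma = rho) ->
  U *m (rho *t rhoE) *m adjmx U = L rho *t rhoE ->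
  conj_anti thS rho = rho /\
  (forall A B : 'M[R[i]]_nS,
     ip_rho rho (dualmap L A) B
     = ip_rho rho A (conj_anti thS (dualmap L (conj_anti thS B)))).
Proof.
move=> thS_invol thE_invol HS_sa HE_sa HS_rev HE_rev V_sa V_rev _ [[rhoE_sa _] rhoE_tr]
  thE_rhoE H U L _ rho_st L_rho rho_uniq U_rho.
have TS_invol := antiunitary_involution_mx thS_invol.
have TE_invol := antiunitary_involution_mx thE_invol.
have W_invol := tensmx_invol TS_invol TE_invol.
have H_sa : adjmx H = H by rewrite !adjmxD !adjmx_tens !adjmx1 HS_sa HE_sa V_sa.
have H_rev : conj_antimx (mx_of thS *t mx_of thE) H = H.
  rewrite !conj_antimxD !conj_antimx_tens !conj_antimx1 //.
  by rewrite !conj_antimx_commute // (conj_antimx_fixed W_invol V_rev).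
have U_rev : conj_antimx (mx_of thS *t mx_of thE) U = adjmx U.
  by rewrite conj_antimx_expmx // conj_antimxZ H_rev expmx_adj adjmxZ H_sa.
have U_unit : U *m adjmx U = 1%:M.
  by apply: expmx_skew_unitary; rewrite adjmxZ H_sa conjc_imaginary scaleNr opprK.
have UP : U *m (rho *t rhoE) = (rho *t rhoE) *m U.
  by rewrite -{2}L_rho -U_rho -[_ *m adjmx U *m U]mulmxA (mulmx1C U_unit) mulmx1.
have rhoE_rev : conj_antimx (mx_of thE) rhoE = rhoE by rewrite -(conj_antiE thE_invol.1).
split.
  apply: rho_uniq; first exact: conj_anti_state.
  rewrite (conj_antiE thS_invol.1).
  exact: channel_conj_antimx TS_invol TE_invol rhoE_rev U_rev _ (mulmx1C U_unit) UP rhoE_tr.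
move=> A B; rewrite !(conj_antiE thS_invol.1).
rewrite (conj_antimx_dualmap_channel TS_invol TE_invol rhoE_rev U_rev).
apply: channel_dual_adjoint => //.
by have := congr1 (@adjmx _ _ _) UP; rewrite !adjmxM adjmx_tens rho_st.1.1 rhoE_sa.
Qed.
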